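(* Let $\sigma\ge0$, $\gamma>0$, $V=\sqrt{1+\sigma}$, let $(n^\varepsilon,u^\varepsilon,\phi^\varepsilon)$ be the solitary wave solution and $\widetilde N_\varepsilon(\xi)=\frac{n^\varepsilon(\xi)-1}{\varepsilon}$. There exist positive constants $\varepsilon_0$ and $\delta_1$ such that for each $0<\delta<\delta_1$ there exists $\xi_\delta>0$ with \[ 0<\widetilde N_\varepsilon(\xi)\le\delta\qquad\text{for all }\xi\ge\xi_\delta\text{ and all }0<\varepsilon<\varepsilon_0. \] Here $\delta_1,\delta,\xi_\delta$ are independent of $\varepsilon$ and $\xi$.
   Context: For $\varepsilon>0$, consider the system in $\xi\in\mathbb{R}$: $-(V+\gamma\varepsilon)n'+(nu)'=0$, $-(V+\gamma\varepsilon)u'+uu'+\sigma n'/n=-\phi'$, $\varepsilon\phi''=e^\phi-n$, with $n\to1,u\to0,\phi\to0$ as $|\xi|\to\infty$. With $V=\sqrt{1+\sigma}$, for all sufficiently small $\varepsilon>0$ it has a non-trivial smooth solution unique up to translation; the ''solitary wave solution'' $(n^\varepsilon,u^\varepsilon,\phi^\varepsilon)$ is the translate that is even in $\xi$ and has all components strictly decreasing on $(0,\infty)$. *)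

From Stdlib Require Import Reals.
From Coquelicot Require Import Coquelicot.
Open Scope R_scope.

Definition smooth (f : R -> R) : Prop :=
  forall (k : nat) (x : R), ex_derive_n f k x.

Definition solves_system (sigma gamma V eps : R) (n u phi : R -> R) : Prop :=
  forall xi : R,
    - (V + gamma * eps) * Derive n xi + Derive (fun x => n x * u x) xi = 0 /\
    - (V + gamma * eps) * Derive u xi + u xi * Derive u xi
      + sigma * Derive n xi / n xi = - Derive phi xi /\
    eps * Derive_n phi 2 xi = exp (phi xi) - n xi.

Definition far_field (n u phi : R -> R) : Prop :=
  is_lim n p_infty 1 /\ is_lim n m_infty 1 /\
  is_lim u p_infty 0 /\ is_lim u m_infty 0 /\
  is_lim phi p_infty 0 /\ is_lim phi m_infty 0.

Definition even_fun (f : R -> R) : Prop := forall x, f (- x) = f x.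

Definition strict_decr_pos (f : R -> R) : Prop :=
  forall x y, 0 < x -> x < y -> f y < f x.

(* (n,u,phi) is the solitary wave solution for parameter eps: a smooth,
   non-trivial solution of the system with the far-field conditions, which is
   the (unique up to translation) translate that is even and has all
   components strictly decreasing on (0, infinity). *)
Definition solitary_wave (sigma gamma eps : R) (n u phi : R -> R) : Prop :=
  smooth n /\ smooth u /\ smooth phi /\
  solves_system sigma gamma (sqrt (1 + sigma)) eps n u phi /\
  far_field n u phi /\
  ~ (forall xi, n xi = 1 /\ u xi = 0 /\ phi xi = 0) /\
  even_fun n /\ even_fun u /\ even_fun phi /\
  strict_decr_pos n /\ strict_decr_pos u /\ strict_decr_pos phi.

From Stdlib Require Import Reals Lra Psatz.
From Coquelicot Require Import Coquelicot.
Open Scope R_scope.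

(* On (0, oo) the first two equations integrate, thanks to the far-field limits, to
   u = c (n-1)/n and phi = Phi(n-1) with c = V + gamma eps, and multiplying the Poisson
   equation by phi' gives the energy identity eps phi'^2/2 = E(n-1).  For x = n - 1 = O(eps)
   one has E(x) ~ V gamma eps x^2 - V^2 x^3/3 and eps phi'' = F(x) ~ 2 V gamma eps x - V^2 x^2:
   the sign of E bounds the amplitude by 4 gamma eps/V, and as long as x >= 5 gamma eps/(2V)
   the force F(x) <= -gamma^2 eps^2 bends phi down fast enough that this regime ends before
   xi = 2 + 16/(gamma V).  Beyond that point E(x) >= gamma eps x^2/12, i.e.
   phi' <= -kappa phi with kappa = min(1, gamma/24) independent of eps, and
   n - 1 <= 2 phi = O(eps) e^(-kappa xi). *)

Lemma is_derive_continuity_pt (f : R -> R) x l : is_derive f x l -> continuity_pt f x.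
Proof.
  intro H. apply continuity_pt_filterlim, (ex_derive_continuous f x). now exists l.
Qed.

Lemma increment_le_of_derive_le (f g df dg : R -> R) a b : a <= b ->
  (forall x, a <= x <= b -> is_derive f x (df x)) ->
  (forall x, a <= x <= b -> is_derive g x (dg x)) ->
  (forall x, a <= x <= b -> df x <= dg x) ->
  f b - f a <= g b - g a.
Proof.
  intros Hab Hf Hg Hle.
  assert (Hh : forall x, a <= x <= b -> is_derive (fun t => g t - f t) x (dg x - df x)).
  { intros x Hx. exact (is_derive_minus g f x _ _ (Hg x Hx) (Hf x Hx)). }
  destruct (Req_dec a b) as [<-|Hab']; [lra|].
  destruct (MVT_gen (fun t => g t - f t) a b (fun t => dg t - df t)) as [x [Hx Heq]];
    cbv zeta in *; rewrite Rmin_left, Rmax_right in * by lra.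
  - intros x Hx. apply Hh. lra.
  - intros x Hx. exact (is_derive_continuity_pt _ _ _ (Hh x Hx)).
  - specialize (Hle x Hx). nra.
Qed.

Lemma increment_between (f lo hi df dlo dhi : R -> R) a b : a <= b ->
  (forall x, a <= x <= b -> is_derive f x (df x)) ->
  (forall x, a <= x <= b -> is_derive lo x (dlo x)) ->
  (forall x, a <= x <= b -> is_derive hi x (dhi x)) ->
  (forall x, a <= x <= b -> dlo x <= df x <= dhi x) ->
  lo b - lo a <= f b - f a <= hi b - hi a.
Proof.
  intros Hab Hf Hlo Hhi Hle. split.
  - apply (increment_le_of_derive_le lo f dlo df); auto. intros x Hx. apply Hle, Hx.
  - apply (increment_le_of_derive_le f hi df dhi); auto. intros x Hx. apply Hle, Hx.
Qed.

Lemma nonneg_of_linear_differential_ineq (z dz p P : R -> R) a b : a <= b ->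
  (forall x, a <= x <= b -> is_derive z x (dz x)) ->
  (forall x, a <= x <= b -> is_derive P x (p x)) ->
  (forall x, a <= x <= b -> p x * z x <= dz x) -> 0 <= z a -> 0 <= z b.
Proof.
  intros Hab Hz HP Hle Ha.
  (* z e^{-P} is nondecreasing *)
  assert (H : 0 - 0 <= z b * exp (- P b) - z a * exp (- P a)).
  { apply (increment_le_of_derive_le (fun _ => 0) (fun x => z x * exp (- P x)) (fun _ => 0)
      (fun x => (dz x - p x * z x) * exp (- P x))); [exact Hab| | |].
    - intros x _. auto_derive; reflexivity.
    - intros x Hx. specialize (Hz x Hx). specialize (HP x Hx). auto_derive.
      + split; [now exists (dz x)|]. split; [now exists (p x)|exact I].
      + replace (Derive (fun y => z y) x) with (dz x) by (symmetry; now apply is_derive_unique).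
        replace (Derive (fun y => P y) x) with (p x) by (symmetry; now apply is_derive_unique).
        ring.
    - intros x Hx. specialize (Hle x Hx). pose proof (exp_pos (- P x)). nra. }
  pose proof (exp_pos (- P a)). pose proof (exp_pos (- P b)). nra.
Qed.

Lemma is_lim_p_infty_Rabs (f : R -> R) (l eps : R) : is_lim f p_infty l -> 0 < eps ->
  exists M, forall x, M < x -> Rabs (f x - l) < eps.
Proof.
  intros H He. apply is_lim_spec in H.
  destruct (H (mkposreal eps He)) as [M HM]. now exists M.
Qed.

Lemma derive_zero_const (f : R -> R) a : (forall x, a < x -> is_derive f x 0) ->
  forall x y, a < x -> a < y -> f x = f y.
Proof.
  intros Hd.
  assert (H : forall x y, a < x -> x < y -> f x = f y).
  { intros x y Hx Hxy. apply eq_is_derive; [|exact Hxy]. intros t Ht. apply Hd. lra. }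
  intros x y Hx Hy. destruct (Rtotal_order x y) as [Hxy|[<-|Hxy]].
  - now apply H.
  - reflexivity.
  - symmetry. now apply H.
Qed.

Lemma derive_zero_eq_lim (f : R -> R) a (l : R) : (forall x, a < x -> is_derive f x 0) ->
  is_lim f p_infty l -> forall x, a < x -> f x = l.
Proof.
  intros Hd Hl x Hx.
  assert (Hx' : is_lim f p_infty (f x)).
  { apply (is_lim_ext_loc (fun _ => f x)); [|apply is_lim_const].
    exists a. intros y Hy. apply (derive_zero_const f a Hd); lra. }
  apply is_lim_unique in Hl, Hx'. rewrite Hl in Hx'. now injection Hx'.
Qed.

Lemma strict_decr_pos_gt_lim (f : R -> R) (l : R) : strict_decr_pos f -> is_lim f p_infty l ->
  forall x, 0 < x -> l < f x.
Proof.
  intros Hd Hl x Hx.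
  destruct (Rlt_or_le l (f x)) as [|Hle]; [assumption|exfalso].
  pose proof (Hd x (x + 1) Hx ltac:(lra)) as H1.
  destruct (is_lim_p_infty_Rabs f l (l - f (x + 1)) Hl ltac:(lra)) as [M HM].
  set (y := Rmax M (x + 1) + 1).
  pose proof (Rmax_l M (x + 1)). pose proof (Rmax_r M (x + 1)).
  specialize (HM y ltac:(unfold y; lra)). apply Rabs_def2 in HM.
  pose proof (Hd (x + 1) y ltac:(lra) ltac:(unfold y; lra)). lra.
Qed.

Lemma strict_decr_pos_derive_nonpos (f : R -> R) x l : strict_decr_pos f -> 0 < x ->
  is_derive f x l -> l <= 0.
Proof.
  intros Hd Hx H. apply is_derive_Reals in H.
  destruct (Rle_or_lt l 0) as [|Hl]; [assumption|exfalso].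
  destruct (H l Hl) as [del Hdel]. pose proof (cond_pos del).
  pose proof (Rmin_l (del / 2) (x / 2)). pose proof (Rmin_r (del / 2) (x / 2)).
  assert (Hh : 0 < Rmin (del / 2) (x / 2)) by (apply Rmin_pos; lra).
  set (h := Rmin (del / 2) (x / 2)) in *.
  specialize (Hdel h ltac:(lra) ltac:(rewrite Rabs_pos_eq; lra)). apply Rabs_def2 in Hdel.
  pose proof (Hd x (x + h) Hx ltac:(lra)).
  assert ((f (x + h) - f x) / h < 0) by (apply Rdiv_neg_pos; lra).
  lra.
Qed.

Lemma lim_sq_derive_eq_0 (f : R -> R) (G : R) :
  (forall x, 0 < x -> 0 < f x) ->
  (forall x, 0 < x -> is_derive f x (Derive f x)) ->
  (forall x, 0 < x -> Derive f x <= 0) ->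
  is_lim (fun x => Derive f x ^ 2) p_infty G -> G = 0.
Proof.
  intros Hpos Hder Hnonpos Hlim.
  destruct (Rtotal_order G 0) as [HG|[HG|HG]]; [exfalso|exact HG|exfalso].
  - destruct (is_lim_p_infty_Rabs _ _ (- G) Hlim ltac:(lra)) as [M HM].
    specialize (HM (M + 1) ltac:(lra)). apply Rabs_def2 in HM.
    pose proof (pow2_ge_0 (Derive f (M + 1))). lra.
  - (* eventually f' <= -a, so f would become negative *)
    set (a := Rmin 1 (G / 2)).
    assert (Ha : 0 < a <= G / 2 /\ a <= 1)
      by (unfold a; repeat split; [apply Rmin_pos|apply Rmin_r|apply Rmin_l]; lra).
    destruct (is_lim_p_infty_Rabs _ _ (G / 2) Hlim ltac:(lra)) as [M HM].
    set (x0 := Rmax M 0 + 1).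
    pose proof (Rmax_l M 0). pose proof (Rmax_r M 0).
    assert (Hslope : forall t, x0 <= t -> Derive f t <= - a).
    { intros t Ht. specialize (HM t ltac:(unfold x0 in *; lra)). apply Rabs_def2 in HM.
      pose proof (Hnonpos t ltac:(unfold x0 in *; lra)). nra. }
    set (T := f x0 / a + 1).
    pose proof (Hpos x0 ltac:(unfold x0; lra)).
    assert (HT : 0 < T) by (unfold T; assert (0 < f x0 / a) by (apply Rdiv_lt_0_compat; lra); lra).
    assert (Hdecr : f (x0 + T) - f x0 <= (fun t => - a * t) (x0 + T) - (fun t => - a * t) x0).
    { apply (increment_le_of_derive_le f (fun t => - a * t) (Derive f) (fun _ => - a)); [lra| | |].
      - intros t Ht. apply Hder. unfold x0 in *. lra.
      - intros t _. auto_derive; [easy|ring].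
      - intros t Ht. apply Hslope. lra. }
    cbv beta in Hdecr.
    pose proof (Hpos (x0 + T) ltac:(unfold x0 in *; lra)).
    assert (a * T = f x0 + a) by (unfold T; field; lra).
    lra.
Qed.

(* Along the wave, with x = n - 1 and c = V + gamma eps: u = velocity c x, phi = potential c s x,
   eps phi'' = force c s x and eps phi'^2 / 2 = energy c s x. *)
Definition velocity (c x : R) : R := c * x / (1 + x).

Definition potential (c s x : R) : R :=
  c * velocity c x - velocity c x ^ 2 / 2 - s * ln (1 + x).

Definition potential_deriv (c s x : R) : R := c ^ 2 / (1 + x) ^ 3 - s / (1 + x).

Definition force (c s x : R) : R := exp (potential c s x) - 1 - x.

Definition energy (c s x : R) : R := exp (potential c s x) - 1 - c * velocity c x + s * x.

Lemma is_derive_potential c s x : -1 < x ->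
  is_derive (potential c s) x (potential_deriv c s x).
Proof. intro Hx. unfold potential, velocity, potential_deriv. auto_derive; [lra|field; lra]. Qed.

Lemma is_derive_force c s x : -1 < x ->
  is_derive (force c s) x (exp (potential c s x) * potential_deriv c s x - 1).
Proof.
  intro Hx. pose proof (is_derive_potential c s x Hx) as H. unfold force. auto_derive.
  - now exists (potential_deriv c s x).
  - replace (Derive (fun y => potential c s y) x) with (potential_deriv c s x)
      by (symmetry; now apply is_derive_unique).
    ring.
Qed.

Lemma is_derive_energy c s x : -1 < x ->
  is_derive (energy c s) x (force c s x * potential_deriv c s x).
Proof.
  intro Hx. pose proof (is_derive_potential c s x Hx) as H. unfold energy, velocity. auto_derive.
  - split; [now exists (potential_deriv c s x)|]. split; [lra|exact I].
  - replace (Derive (fun y => potential c s y) x) with (potential_deriv c s x)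
      by (symmetry; now apply is_derive_unique).
    unfold force, potential_deriv. field. lra.
Qed.

Lemma force_derive_eq c s x : -1 < x ->
  exp (potential c s x) * potential_deriv c s x - 1
  = (c ^ 2 / (1 + x) ^ 2 - 1 - s) + potential_deriv c s x * force c s x.
Proof. intro Hx. unfold force, potential_deriv. field. lra. Qed.

Lemma potential_0 c s : potential c s 0 = 0.
Proof. unfold potential, velocity. rewrite Rplus_0_r, ln_1. field. Qed.

Lemma force_0 c s : force c s 0 = 0.
Proof. unfold force. rewrite potential_0, exp_0. ring. Qed.

Lemma energy_0 c s : energy c s 0 = 0.
Proof. unfold energy, velocity. rewrite potential_0, exp_0. field. Qed.

Lemma inv_sq_le t : 0 <= t -> 1 / (1 + t) ^ 2 <= 1 - 2 * t + 4 * t ^ 2.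
Proof.
  intro Ht. assert (0 < (1 + t) ^ 2) by (apply pow_lt; lra).
  apply (Rmult_le_reg_r ((1 + t) ^ 2)); [assumption|]. field_simplify; [|lra].
  assert (0 <= t ^ 3) by (apply pow_le; lra). assert (0 <= t ^ 4) by (apply pow_le; lra).
  nra.
Qed.

Lemma inv_sq_ge t : 0 <= t -> 1 - 2 * t <= 1 / (1 + t) ^ 2.
Proof.
  intro Ht. assert (0 < (1 + t) ^ 2) by (apply pow_lt; lra).
  apply (Rmult_le_reg_r ((1 + t) ^ 2)); [assumption|]. field_simplify; [|lra].
  assert (0 <= t ^ 3) by (apply pow_le; lra). nra.
Qed.

Lemma inv_between t : 0 <= t -> 1 - t <= 1 / (1 + t) <= 1.
Proof. intro. split; apply (Rmult_le_reg_r (1 + t)); try lra; field_simplify; nra. Qed.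

Lemma inv_cube_between t : 0 <= t -> 1 - 3 * t <= 1 / (1 + t) ^ 3 <= 1.
Proof.
  intro Ht. assert (0 < (1 + t) ^ 3) by (apply pow_lt; lra).
  assert (0 <= t ^ 3) by (apply pow_le; lra). assert (0 <= t ^ 4) by (apply pow_le; lra).
  split; apply (Rmult_le_reg_r ((1 + t) ^ 3)); try lra; field_simplify; try lra; nra.
Qed.

Lemma potential_deriv_abs_le c s t : 0 <= t -> 0 <= s ->
  Rabs (potential_deriv c s t) <= c ^ 2 + s.
Proof.
  intros Ht Hs. unfold potential_deriv.
  destruct (inv_cube_between t Ht) as [_ H3]. destruct (inv_between t Ht) as [_ H1].
  assert (0 < 1 / (1 + t) ^ 3) by (apply Rdiv_lt_0_compat; [lra|apply pow_lt; lra]).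
  assert (0 < 1 / (1 + t)) by (apply Rdiv_lt_0_compat; lra).
  pose proof (pow2_ge_0 c).
  replace (c ^ 2 / (1 + t) ^ 3 - s / (1 + t)) with (c ^ 2 * (1 / (1 + t) ^ 3) - s * (1 / (1 + t)))
    by (field; lra).
  apply Rabs_le. split; nra.
Qed.

Section FirstIntegrals.

Variables c s e : R.
Variables N U P : R -> R.
Hypothesis he : 0 < e.
Hypothesis hN_ex : forall x, ex_derive N x.
Hypothesis hU_ex : forall x, ex_derive U x.
Hypothesis hP_ex : forall x, ex_derive P x.
Hypothesis hDP_ex : forall x, ex_derive (Derive P) x.
Hypothesis hmass : forall x, - c * Derive N x + Derive (fun y => N y * U y) x = 0.
Hypothesis hmomentum : forall x,
  - c * Derive U x + U x * Derive U x + s * Derive N x / N x = - Derive P x.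
Hypothesis hpoisson : forall x, e * Derive (Derive P) x = exp (P x) - N x.
Hypothesis hN_lim : is_lim N p_infty 1.
Hypothesis hU_lim : is_lim U p_infty 0.
Hypothesis hP_lim : is_lim P p_infty 0.
Hypothesis hN_decr : strict_decr_pos N.
Hypothesis hP_decr : strict_decr_pos P.

Lemma N_gt_1 x : 0 < x -> 1 < N x.
Proof. now apply strict_decr_pos_gt_lim. Qed.

Lemma P_pos x : 0 < x -> 0 < P x.
Proof. now apply strict_decr_pos_gt_lim. Qed.

Lemma Derive_P_nonpos x : 0 < x -> Derive P x <= 0.
Proof. intro Hx. apply (strict_decr_pos_derive_nonpos P x); auto. now apply Derive_correct. Qed.

Lemma flux_integral x : 0 < x -> N x * U x - c * N x = - c.
Proof.
  apply (derive_zero_eq_lim (fun y => N y * U y - c * N y) 0).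
  - intros y _. specialize (hmass y).
    assert (ex_derive (fun z => N z * U z) y) by (apply ex_derive_mult; auto).
    auto_derive; [repeat split; auto|].
    rewrite Derive_mult in hmass by auto.
    change (fun z => N z) with N. change (fun z => U z) with U. lra.
  - replace (- c) with (1 * 0 - c * 1) by ring.
    apply is_lim_minus'; [apply (is_lim_mult N U p_infty 1 0); easy|].
    now apply (is_lim_scal_l N c p_infty 1).
Qed.

Lemma U_eq_velocity x : 0 < x -> U x = velocity c (N x - 1).
Proof.
  intro Hx. pose proof (flux_integral x Hx). pose proof (N_gt_1 x Hx).
  unfold velocity. replace (1 + (N x - 1)) with (N x) by ring.
  apply (Rmult_eq_reg_l (N x)); [|lra]. field_simplify; lra.
Qed.

Lemma bernoulli_integral x : 0 < x -> P x = potential c s (N x - 1).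
Proof.
  intro Hx.
  assert (HB : P x = c * U x - U x ^ 2 / 2 - s * ln (N x)).
  { enough (H : - c * U x + U x ^ 2 / 2 + s * ln (N x) + P x = - c * 0 + 0 ^ 2 / 2 + s * ln 1 + 0)
      by (rewrite ln_1 in H; lra).
    apply (derive_zero_eq_lim (fun y => - c * U y + U y ^ 2 / 2 + s * ln (N y) + P y) 0);
      [| |exact Hx].
    - intros y Hy. specialize (hmomentum y). pose proof (N_gt_1 y Hy).
      auto_derive; [repeat split; auto; lra|].
      change (fun z => N z) with N. change (fun z => U z) with U. change (fun z => P z) with P.
      replace (Derive P y) with (- (- c * Derive U y + U y * Derive U y + s * Derive N y / N y))
        by lra.
      field. lra.
    - apply is_lim_plus'; [apply is_lim_plus'; [apply is_lim_plus'|]|]; auto.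
      + now apply (is_lim_scal_l U (- c) p_infty 0).
      + apply (is_lim_ext (fun y => / 2 * (U y * U y))); [intro y; field|].
        replace (0 ^ 2 / 2) with (/ 2 * (0 * 0)) by field.
        apply (is_lim_scal_l _ (/ 2) p_infty (0 * 0)). now apply (is_lim_mult U U p_infty 0 0).
      + apply (is_lim_scal_l _ s p_infty (ln 1)).
        apply (is_lim_comp_continuous N ln p_infty 1 hN_lim). apply continuous_ln. lra. }
  rewrite HB, U_eq_velocity by exact Hx. unfold potential.
  now replace (1 + (N x - 1)) with (N x) by ring.
Qed.

Lemma energy_defect_derive x : 0 < x ->
  is_derive (fun y => e * Derive P y ^ 2 / 2 - (exp (P y) - 1 - c * U y + s * (N y - 1))) x 0.
Proof.
  intro Hx. specialize (hmomentum x). specialize (hpoisson x).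
  pose proof (flux_integral x Hx). pose proof (N_gt_1 x Hx).
  assert (HNP : N x * Derive P x = c * Derive U x - s * Derive N x).
  { replace (Derive P x) with (- (- c * Derive U x + U x * Derive U x + s * Derive N x / N x))
      by lra.
    replace (N x * - (- c * Derive U x + U x * Derive U x + s * Derive N x / N x))
      with (c * N x * Derive U x - (N x * U x) * Derive U x - s * Derive N x) by (field; lra).
    replace (N x * U x) with (c * N x - c) by lra. ring. }
  auto_derive; [repeat split; auto|].
  change (fun z => N z) with N. change (fun z => U z) with U. change (fun z => P z) with P.
  change (fun z => Derive P z) with (Derive P).
  replace (Derive (Derive P) x) with ((exp (P x) - N x) / e) by (rewrite <- hpoisson; field; lra).
  field_simplify; [|lra]. nra.
Qed.

Lemma energy_integral x : 0 < x -> e * Derive P x ^ 2 / 2 = energy c s (N x - 1).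
Proof.
  intro Hx.
  set (R0 := fun y => exp (P y) - 1 - c * U y + s * (N y - 1)).
  set (G0 := e * Derive P 1 ^ 2 / 2 - R0 1).
  assert (HG : forall y, 0 < y -> e * Derive P y ^ 2 / 2 = R0 y + G0).
  { intros y Hy. pose proof (derive_zero_const _ 0 energy_defect_derive y 1 Hy Rlt_0_1) as H.
    unfold G0, R0 in *. lra. }
  assert (HR0 : is_lim R0 p_infty (exp 0 - 1 - c * 0 + s * (1 - 1))).
  { apply is_lim_plus'; [apply is_lim_minus'; [apply is_lim_minus'|]|].
    - apply (is_lim_comp_continuous P exp p_infty 0 hP_lim), continuous_exp.
    - apply is_lim_const.
    - now apply (is_lim_scal_l U c p_infty 0).
    - apply (is_lim_scal_l _ s p_infty (1 - 1)).
      apply is_lim_minus'; [exact hN_lim|apply is_lim_const]. }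
  rewrite exp_0 in HR0. replace (1 - 1 - c * 0 + s * (1 - 1)) with 0 in HR0 by ring.
  assert (Hlim : is_lim (fun y => Derive P y ^ 2) p_infty (2 / e * (0 + G0))).
  { apply (is_lim_ext_loc (fun y => 2 / e * (R0 y + G0))).
    - exists 0. intros y Hy. rewrite <- HG by exact Hy. field. lra.
    - apply (is_lim_scal_l _ (2 / e) p_infty (0 + G0)).
      apply is_lim_plus'; [exact HR0|apply is_lim_const]. }
  apply lim_sq_derive_eq_0 in Hlim;
    [|exact P_pos|intros y _; now apply Derive_correct|exact Derive_P_nonpos].
  assert (HG0 : G0 = 0).
  { apply Rmult_integral in Hlim as [H|H]; [|lra].
    exfalso. assert (0 < 2 / e) by (apply Rdiv_lt_0_compat; lra). lra. }
  rewrite (HG x Hx), HG0. unfold R0, energy.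
  rewrite <- bernoulli_integral, <- U_eq_velocity by exact Hx. ring.
Qed.

Lemma poisson_force x : 0 < x -> e * Derive (Derive P) x = force c s (N x - 1).
Proof.
  intro Hx. rewrite hpoisson. unfold force. rewrite <- bernoulli_integral by exact Hx. ring.
Qed.

End FirstIntegrals.

Section SmallAmplitude.

Variables s g e : R.
Hypothesis hs : 0 <= s.
Hypothesis hg : 0 < g.
Hypothesis he : 0 < e.

Let V := sqrt (1 + s).
Let L := 1 + s + g.
Let c := V + g * e.
Let d := c ^ 2 - s - 1.

Hypothesis hsmall : e * (10000 * L ^ 6) <= g.

Lemma V_sq : V * V = 1 + s.
Proof. apply sqrt_sqrt. lra. Qed.

Lemma V_ge_1 : 1 <= V.
Proof. rewrite <- sqrt_1. apply sqrt_le_1_alt. lra. Qed.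

Lemma V_le_L : V <= L.
Proof. pose proof V_sq. pose proof V_ge_1. unfold L. nra. Qed.

Lemma div_V_le x : 0 <= x -> x / V <= x.
Proof.
  intro Hx. pose proof V_ge_1. unfold Rdiv.
  assert (0 < / V <= 1)
    by (split; [apply Rinv_0_lt_compat|rewrite <- Rinv_1; apply Rinv_le_contravar]; lra).
  nra.
Qed.

Lemma L_ge_1 : 1 <= L.
Proof. unfold L. lra. Qed.

Lemma small_eL5 : e * L ^ 5 <= g / 10000.
Proof.
  pose proof L_ge_1. assert (0 <= e * L ^ 5) by (pose proof (pow_le L 5); nra).
  replace (L ^ 6) with (L ^ 5 * L) in hsmall by ring. nra.
Qed.

Lemma small_e_pow k : (k <= 5)%nat -> e * L ^ k <= 1 / 10000.
Proof.
  intro Hk. pose proof L_ge_1.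
  assert (L ^ k <= L ^ 5) by (apply Rle_pow; assumption).
  assert (e * L ^ 5 * (10000 * L) <= 1 * L)
    by (replace (e * L ^ 5 * (10000 * L)) with (e * (10000 * L ^ 6)) by ring; unfold L in *; lra).
  assert (e * L ^ 5 * 10000 <= 1) by (apply (Rmult_le_reg_r L); lra).
  assert (e * L ^ k <= e * L ^ 5) by (apply Rmult_le_compat_l; lra).
  lra.
Qed.

Lemma le_4Le x : x <= 4 * g * e -> x <= 4 * L * e.
Proof. intro Hx. assert (g * e <= L * e) by (apply Rmult_le_compat_r; unfold L; lra). lra. Qed.

Lemma ge_le_Vge : g * e <= V * g * e.
Proof. pose proof V_ge_1. assert (0 <= (V - 1) * (g * e)) by (apply Rmult_le_pos; nra). lra. Qed.

Lemma quartic_error_le x : 0 <= x <= 4 * L * e -> 100 * L ^ 4 * e * x <= L ^ 2 * e.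
Proof.
  intro Hx. pose proof L_ge_1. pose proof (small_e_pow 3 ltac:(lia)).
  pose proof (pow_le L 4 ltac:(lra)).
  assert (100 * L ^ 4 * e * x <= 100 * L ^ 4 * e * (4 * L * e)) by (apply Rmult_le_compat_l; nra).
  replace (100 * L ^ 4 * e * (4 * L * e)) with (400 * (e * L ^ 3) * (L ^ 2 * e)) in * by ring.
  assert (0 <= L ^ 2 * e) by nra. nra.
Qed.

Lemma c_sq_bounds : 1 + s <= c ^ 2 <= 4 * L ^ 2.
Proof.
  pose proof V_sq. pose proof V_le_L. pose proof V_ge_1.
  pose proof (small_e_pow 0 ltac:(lia)) as He1. simpl in He1.
  assert (0 <= g * e <= L) by (unfold L; split; nra). unfold c. split; nra.
Qed.

Lemma d_eq : d = 2 * V * g * e + g ^ 2 * e ^ 2.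
Proof. pose proof V_sq. unfold d, c. nra. Qed.

Lemma d_bounds : 2 * V * g * e <= d <= 3 * L ^ 2 * e.
Proof.
  rewrite d_eq. pose proof V_le_L. pose proof V_ge_1.
  pose proof (small_e_pow 1 ltac:(lia)) as HeL. simpl in HeL.
  assert (g <= L) by (unfold L; lra).
  assert (HgeL : 0 <= g * e <= L * e) by (split; [|apply Rmult_le_compat_r]; nra).
  assert (V * (g * e) <= L * (L * e)) by (apply Rmult_le_compat; lra).
  assert ((g * e) * (g * e) <= (L * e) * (L * e)) by (apply Rmult_le_compat; lra).
  assert (HL1 : 1 <= L) by (unfold L; lra).
  assert ((L * e) * (L * e) <= L * e * L) by (apply Rmult_le_compat_l; nra).
  split; nra.
Qed.

Lemma d_nonneg : 0 <= d.
Proof.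
  destruct d_bounds as [Hd _]. pose proof V_ge_1.
  assert (0 <= V * g * e) by (repeat apply Rmult_le_pos; lra). lra.
Qed.

Lemma force_error_budget x : 0 <= x <= 4 * L * e ->
  6 * L ^ 2 * e + 4 * c ^ 2 * x + (c ^ 2 + s) * (d + (1 + s) * x + 100 * L ^ 4 * e * x)
  <= 199 * L ^ 4 * e.
Proof.
  intro Hx. pose proof L_ge_1. destruct c_sq_bounds. destruct d_bounds.
  pose proof (small_e_pow 3 ltac:(lia)). pose proof (pow2_ge_0 c).
  pose proof d_nonneg.
  assert (HsL : 1 + s <= L) by (unfold L; lra).
  assert (L2 : 1 <= L ^ 2) by nra.
  assert (Hl4 : L ^ 4 = L ^ 2 * L ^ 2) by ring.
  assert (Hl3 : L ^ 3 = L * L ^ 2) by ring.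
  assert (A1 : 4 * c ^ 2 * x <= 64 * L ^ 4 * e).
  { assert (c ^ 2 * x <= (4 * L ^ 2) * (4 * L * e)) by (apply Rmult_le_compat; lra).
    assert (L * L ^ 2 <= L ^ 2 * L ^ 2) by nra. nra. }
  assert (A2 : (1 + s) * x <= L * (4 * L * e)) by (apply Rmult_le_compat; lra).
  pose proof (quartic_error_le x Hx) as A3.
  assert (A4 : 0 <= 100 * L ^ 4 * e * x) by (pose proof (pow_le L 4); apply Rmult_le_pos; nra).
  assert (A5 : (c ^ 2 + s) * (d + (1 + s) * x + 100 * L ^ 4 * e * x)
               <= (5 * L ^ 2) * (8 * L ^ 2 * e)).
  { apply Rmult_le_compat; nra. }
  nra.
Qed.

Lemma potential_deriv_poly_abs_le sg t : sg = 1 \/ sg = -1 -> 0 <= t ->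
  Rabs (potential_deriv c s t * (d * t - (1 + s) * t ^ 2 + sg * (100 * L ^ 4) * e * t ^ 2))
  <= (c ^ 2 + s) * (t * (d + (1 + s) * t + 100 * L ^ 4 * e * t)).
Proof.
  intros Hsg Ht. pose proof L_ge_1. pose proof d_nonneg. pose proof (pow_le L 4 ltac:(lra)).
  rewrite Rabs_mult. apply Rmult_le_compat; try apply Rabs_pos.
  - now apply potential_deriv_abs_le.
  - assert (0 <= 100 * L ^ 4 * e * t ^ 2) by (apply Rmult_le_pos; nra).
    apply Rabs_le. destruct Hsg as [-> | ->]; split; nra.
Qed.

(* [force] solves y' = c^2/(1+x)^2 - 1 - s + potential_deriv * y (force_derive_eq); this
   defect says that d x - (1+s) x^2 + sg 100 L^4 e x^2 is a super- (sg = 1) or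
   sub-solution (sg = -1) of that equation. *)
Lemma force_defect_sign sg t : sg = 1 \/ sg = -1 -> 0 <= t <= 4 * g * e ->
  0 <= sg * ((d - 2 * (1 + s) * t + 2 * sg * (100 * L ^ 4) * e * t)
             - (c ^ 2 / (1 + t) ^ 2 - 1 - s)
             - potential_deriv c s t * (d * t - (1 + s) * t ^ 2 + sg * (100 * L ^ 4) * e * t ^ 2)).
Proof.
  intros Hsg Ht.
  pose proof L_ge_1. destruct c_sq_bounds. destruct d_bounds. pose proof (pow2_ge_0 c).
  pose proof (pow_le L 4 ltac:(lra)). pose proof d_nonneg.
  assert (Htx : 0 <= t <= 4 * L * e) by (split; [|apply le_4Le]; lra).
  pose proof (force_error_budget t Htx) as Hb.
  pose proof (potential_deriv_poly_abs_le sg t Hsg (proj1 Ht)) as HW.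
  set (B := d + (1 + s) * t + 100 * L ^ 4 * e * t) in Hb, HW.
  apply Rabs_le_between in HW.
  assert (HtB : t * (6 * L ^ 2 * e + 4 * c ^ 2 * t + (c ^ 2 + s) * B) <= t * (199 * L ^ 4 * e))
    by (apply Rmult_le_compat_l; lra).
  assert (HL2 : 1 <= L ^ 2) by nra.
  assert (HL24 : L ^ 2 <= L ^ 4) by (replace (L ^ 4) with (L ^ 2 * L ^ 2) by ring; nra).
  assert (6 * L ^ 2 * e * t <= 6 * L ^ 4 * e * t) by (apply Rmult_le_compat_r; nra).
  assert (0 <= L ^ 4 * e * t) by (apply Rmult_le_pos; nra).
  assert (Hdt : d * t <= 3 * L ^ 2 * e * t) by (apply Rmult_le_compat_r; lra).
  replace (c ^ 2 / (1 + t) ^ 2) with (c ^ 2 * (1 / (1 + t) ^ 2)) by (field; lra).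
  destruct Hsg as [-> | ->].
  - pose proof (inv_sq_le t (proj1 Ht)).
    assert (c ^ 2 * (1 / (1 + t) ^ 2) <= c ^ 2 * (1 - 2 * t + 4 * t ^ 2))
      by (apply Rmult_le_compat_l; lra).
    assert (0 <= d * t) by nra.
    unfold d in *. nra.
  - pose proof (inv_sq_ge t (proj1 Ht)).
    assert (c ^ 2 * (1 - 2 * t) <= c ^ 2 * (1 / (1 + t) ^ 2)) by (apply Rmult_le_compat_l; lra).
    assert (0 <= c ^ 2 * t * t) by (apply Rmult_le_pos; [apply Rmult_le_pos|]; lra).
    unfold d in *. nra.
Qed.

Lemma force_between sg x : sg = 1 \/ sg = -1 -> 0 <= x <= 4 * g * e ->
  0 <= sg * (d * x - (1 + s) * x ^ 2 + sg * (100 * L ^ 4) * e * x ^ 2 - force c s x).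
Proof.
  intros Hsg Hx.
  apply (nonneg_of_linear_differential_ineq
    (fun t => sg * (d * t - (1 + s) * t ^ 2 + sg * (100 * L ^ 4) * e * t ^ 2 - force c s t))
    (fun t => sg * ((d - 2 * (1 + s) * t + 2 * sg * (100 * L ^ 4) * e * t)
                   - (exp (potential c s t) * potential_deriv c s t - 1)))
    (potential_deriv c s) (potential c s) 0 x); [lra| | | |].
  - intros t Ht. pose proof (is_derive_force c s t ltac:(lra)) as H. auto_derive.
    + now exists (exp (potential c s t) * potential_deriv c s t - 1).
    + replace (Derive (fun y => force c s y) t)
        with (exp (potential c s t) * potential_deriv c s t - 1)
        by (symmetry; now apply is_derive_unique).
      ring.
  - intros t Ht. apply is_derive_potential. lra.
  - intros t Ht. rewrite force_derive_eq by lra.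
    pose proof (force_defect_sign sg t Hsg ltac:(lra)). lra.
  - rewrite force_0. lra.
Qed.

Lemma force_bounds x : 0 <= x <= 4 * g * e ->
  d * x - (1 + s) * x ^ 2 - 100 * L ^ 4 * e * x ^ 2 <= force c s x
  <= d * x - (1 + s) * x ^ 2 + 100 * L ^ 4 * e * x ^ 2.
Proof.
  intro Hx.
  pose proof (force_between 1 x (or_introl eq_refl) Hx).
  pose proof (force_between (-1) x (or_intror eq_refl) Hx).
  split; lra.
Qed.

Lemma force_abs_le x : 0 <= x <= 4 * g * e -> Rabs (force c s x) <= 8 * L ^ 2 * e * x.
Proof.
  intro Hx. destruct (force_bounds x Hx) as [F1 F2].
  pose proof L_ge_1. destruct d_bounds as [_ Hd]. pose proof d_nonneg.
  pose proof (small_e_pow 3 ltac:(lia)).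
  assert (HsL : 1 + s <= L) by (unfold L; lra).
  assert (Hx' : x <= 4 * L * e) by (apply le_4Le; lra).
  pose proof (pow_le L 4 ltac:(lra)).
  pose proof (quartic_error_le x ltac:(lra)) as B1.
  assert (B2 : d * x <= 3 * L ^ 2 * e * x) by (apply Rmult_le_compat_r; lra).
  assert (B3 : (1 + s) * x * x <= L * (4 * L * e) * x)
    by (apply Rmult_le_compat_r; [lra|apply Rmult_le_compat; lra]).
  assert (B4 : 100 * L ^ 4 * e * x * x <= L ^ 2 * e * x) by (apply Rmult_le_compat_r; lra).
  assert (0 <= d * x) by nra. assert (0 <= (1 + s) * x * x) by nra.
  assert (0 <= 100 * L ^ 4 * e * x * x) by (apply Rmult_le_pos; [apply Rmult_le_pos|]; nra).
  apply Rabs_le. split; nra.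
Qed.

Lemma potential_deriv_near_1 x : 0 <= x <= 4 * g * e ->
  Rabs (potential_deriv c s x - 1) <= 55 * L ^ 3 * e.
Proof.
  intro Hx. pose proof L_ge_1. destruct c_sq_bounds. destruct d_bounds as [_ Hd].
  pose proof (pow2_ge_0 c).
  assert (HsL : s <= L) by (unfold L; lra).
  assert (Hx' : x <= 4 * L * e) by (apply le_4Le; lra).
  destruct (inv_cube_between x (proj1 Hx)). destruct (inv_between x (proj1 Hx)).
  replace (potential_deriv c s x - 1)
    with (d + c ^ 2 * (1 / (1 + x) ^ 3 - 1) - s * (1 / (1 + x) - 1))
    by (unfold potential_deriv, d; field; lra).
  assert (A1 : - (3 * x) * c ^ 2 <= c ^ 2 * (1 / (1 + x) ^ 3 - 1) <= 0) by (split; nra).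
  assert (A2 : 0 <= - s * (1 / (1 + x) - 1) <= s * x) by (split; nra).
  assert (B1 : c ^ 2 * x <= (4 * L ^ 2) * (4 * L * e)) by (apply Rmult_le_compat; lra).
  assert (B2 : s * x <= L * (4 * L * e)) by (apply Rmult_le_compat; lra).
  assert (L2 : L ^ 2 <= L ^ 3) by (replace (L ^ 3) with (L * L ^ 2) by ring; nra).
  assert (L ^ 2 * e <= L ^ 3 * e) by (apply Rmult_le_compat_r; lra).
  assert (L * L = L ^ 2) by ring. assert (L * (L * L) = L ^ 3) by ring.
  pose proof d_nonneg.
  apply Rabs_le. split; nra.
Qed.

Lemma potential_bounds x : 0 <= x <= 4 * g * e -> x / 2 <= potential c s x <= 2 * x.
Proof.
  intro Hx. pose proof (small_e_pow 3 ltac:(lia)).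
  destruct (increment_between (potential c s) (fun t => t / 2) (fun t => 2 * t)
    (potential_deriv c s) (fun _ => 1 / 2) (fun _ => 2) 0 x) as [Hlo Hhi].
  - lra.
  - intros t Ht. apply is_derive_potential. lra.
  - intros t _. auto_derive; [easy|field].
  - intros t _. auto_derive; [easy|field].
  - intros t Ht. pose proof (potential_deriv_near_1 t ltac:(lra)) as Hn.
    apply Rabs_le_between in Hn. lra.
  - rewrite potential_0 in Hlo, Hhi. lra.
Qed.

Lemma force_potential_deriv_bounds t : 0 <= t <= 4 * g * e ->
  d * t - (1 + s) * t ^ 2 - 900 * L ^ 5 * e ^ 2 * t <= force c s t * potential_deriv c s t
  <= d * t - (1 + s) * t ^ 2 + 900 * L ^ 5 * e ^ 2 * t.
Proof.
  intro Ht. destruct (force_bounds t Ht) as [F1 F2].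
  pose proof (force_abs_le t Ht) as FA. pose proof (potential_deriv_near_1 t Ht) as DA.
  pose proof L_ge_1. pose proof (small_e_pow 3 ltac:(lia)).
  assert (Hprod : Rabs (force c s t * (potential_deriv c s t - 1))
                  <= (8 * L ^ 2 * e * t) * (55 * L ^ 3 * e)).
  { rewrite Rabs_mult. apply Rmult_le_compat; try apply Rabs_pos; assumption. }
  apply Rabs_le_between in Hprod.
  assert (Ht' : t <= 4 * L * e) by (apply le_4Le; lra).
  pose proof (pow_le L 4 ltac:(lra)).
  assert (B : 100 * L ^ 4 * e * t ^ 2 <= 100 * L ^ 4 * e * (4 * L * e) * t).
  { replace (100 * L ^ 4 * e * t ^ 2) with ((100 * L ^ 4 * e * t) * t) by ring.
    replace (100 * L ^ 4 * e * (4 * L * e) * t) with ((100 * L ^ 4 * e * t) * (4 * L * e)) by ring.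
    apply Rmult_le_compat_l; [|lra]. apply Rmult_le_pos; [|lra]. nra. }
  assert (0 <= L ^ 5 * e ^ 2 * t)
    by (apply Rmult_le_pos; [apply Rmult_le_pos|]; try apply pow_le; nra).
  replace (force c s t * potential_deriv c s t)
    with (force c s t + force c s t * (potential_deriv c s t - 1)) by ring.
  split; nra.
Qed.

Lemma energy_bounds x : 0 <= x <= 4 * g * e ->
  d * x ^ 2 / 2 - (1 + s) * x ^ 3 / 3 - 450 * L ^ 5 * e ^ 2 * x ^ 2 <= energy c s x
  <= d * x ^ 2 / 2 - (1 + s) * x ^ 3 / 3 + 450 * L ^ 5 * e ^ 2 * x ^ 2.
Proof.
  intro Hx.
  destruct (increment_between (energy c s)
    (fun t => d * t ^ 2 / 2 - (1 + s) * t ^ 3 / 3 - 450 * L ^ 5 * e ^ 2 * t ^ 2)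
    (fun t => d * t ^ 2 / 2 - (1 + s) * t ^ 3 / 3 + 450 * L ^ 5 * e ^ 2 * t ^ 2)
    (fun t => force c s t * potential_deriv c s t)
    (fun t => d * t - (1 + s) * t ^ 2 - 900 * L ^ 5 * e ^ 2 * t)
    (fun t => d * t - (1 + s) * t ^ 2 + 900 * L ^ 5 * e ^ 2 * t) 0 x) as [Hlo Hhi].
  - lra.
  - intros t Ht. apply is_derive_energy. lra.
  - intros t _. auto_derive; [easy|field].
  - intros t _. auto_derive; [easy|field].
  - intros t Ht. apply force_potential_deriv_bounds. lra.
  - rewrite energy_0 in Hlo, Hhi. lra.
Qed.

Lemma energy_neg_at_amplitude : energy c s (4 * g * e / V) < 0.
Proof.
  pose proof V_ge_1. pose proof V_sq. pose proof small_eL5. pose proof L_ge_1.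
  set (X := 4 * g * e / V).
  assert (HX0 : 0 < X) by (unfold X; apply Rdiv_lt_0_compat; nra).
  assert (HX : 0 <= X <= 4 * g * e) by (split; [lra|apply div_V_le; nra]).
  destruct (energy_bounds X HX) as [_ HE].
  rewrite d_eq in HE. rewrite <- V_sq in HE.
  assert (VX : V * X = 4 * g * e) by (unfold X; field; lra).
  pose proof (pow_le L 5 ltac:(lra)).
  assert (Hk : (2 * V * g * e + g ^ 2 * e ^ 2) / 2 - (V * V) * X / 3 + 450 * L ^ 5 * e ^ 2 < 0).
  { replace ((V * V) * X) with (V * (4 * g * e)) by (rewrite <- VX; ring).
    assert (e * (g ^ 2 / 2 + 450 * L ^ 5) <= e * (451 * L ^ 5)).
    { apply Rmult_le_compat_l; [lra|].
      assert (g ^ 2 <= L ^ 5).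
      { assert (g <= L) by (unfold L; lra).
        assert (L ^ 2 <= L ^ 5) by (apply Rle_pow; [lra|lia]). nra. }
      lra. }
    assert (e * (e * (g ^ 2 / 2 + 450 * L ^ 5)) <= e * (451 * (g / 10000)))
      by (apply Rmult_le_compat_l; lra).
    pose proof ge_le_Vge.
    nra. }
  assert (HX2 : 0 < X ^ 2) by (apply pow_lt; lra).
  assert (X ^ 2 * ((2 * V * g * e + g ^ 2 * e ^ 2) / 2 - (V * V) * X / 3 + 450 * L ^ 5 * e ^ 2) < 0)
    by (apply Rmult_pos_neg; assumption).
  lra.
Qed.

Lemma energy_ge_quadratic x : 0 <= x <= 5 * g * e / (2 * V) -> g / 12 * e * x ^ 2 <= energy c s x.
Proof.
  intro Hx. pose proof V_ge_1. pose proof V_sq. pose proof small_eL5.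
  assert (0 < g * e) by (apply Rmult_lt_0_compat; lra).
  assert (Vx : V * x <= 5 * g * e / 2).
  { replace (5 * g * e / 2) with (V * (5 * g * e / (2 * V))) by (field; lra).
    apply Rmult_le_compat_l; lra. }
  assert (Hx4 : x <= 4 * g * e) by nra.
  destruct (energy_bounds x (conj (proj1 Hx) Hx4)) as [HE _].
  rewrite d_eq in HE. rewrite <- V_sq in HE.
  pose proof ge_le_Vge.
  assert (V * (V * x) <= V * (5 * g * e / 2)) by (apply Rmult_le_compat_l; lra).
  assert (e * (e * L ^ 5) <= e * (g / 10000)) by (apply Rmult_le_compat_l; lra).
  assert (0 <= g ^ 2 * e ^ 2) by (apply Rmult_le_pos; apply pow2_ge_0).
  assert (Hk : g / 12 * e
               <= (2 * V * g * e + g ^ 2 * e ^ 2) / 2 - (V * V) * x / 3 - 450 * L ^ 5 * e ^ 2).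
  { replace ((V * V) * x) with (V * (V * x)) by ring. lra. }
  assert (x ^ 2 * (g / 12 * e)
          <= x ^ 2 * ((2 * V * g * e + g ^ 2 * e ^ 2) / 2 - (V * V) * x / 3 - 450 * L ^ 5 * e ^ 2))
    by (apply Rmult_le_compat_l; [apply pow2_ge_0|lra]).
  lra.
Qed.

Lemma force_le_neg x : 5 * g * e / (2 * V) <= x <= 4 * g * e / V ->
  force c s x <= - (g ^ 2 * e ^ 2).
Proof.
  intro Hx. pose proof V_ge_1. pose proof V_sq. pose proof small_eL5. pose proof L_ge_1.
  pose proof (small_e_pow 1 ltac:(lia)) as HeL. simpl in HeL.
  assert (0 < g * e) by (apply Rmult_lt_0_compat; lra).
  assert (Vx : 5 * g * e / 2 <= V * x).
  { replace (5 * g * e / 2) with (V * (5 * g * e / (2 * V))) by (field; lra).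
    apply Rmult_le_compat_l; lra. }
  assert (Hx0 : 0 <= x) by nra.
  assert (Hx4 : x <= 4 * g * e) by (pose proof (div_V_le (4 * g * e) ltac:(lra)); lra).
  destruct (force_bounds x (conj Hx0 Hx4)) as [_ HF].
  rewrite d_eq in HF. rewrite <- V_sq in HF.
  assert (HgL : g <= L) by (unfold L; lra).
  assert (Hx' : x <= 4 * L * e) by (apply le_4Le; lra).
  pose proof (pow_le L 4 ltac:(lra)).
  assert (B1 : 100 * L ^ 4 * e * x <= 100 * L ^ 4 * e * (4 * L * e))
    by (apply Rmult_le_compat_l; nra).
  replace (100 * L ^ 4 * e * (4 * L * e)) with (400 * e * (e * L ^ 5)) in B1 by ring.
  assert (B3 : e * (e * L ^ 5) <= e * (g / 10000)) by (apply Rmult_le_compat_l; lra).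
  assert (B4 : g ^ 2 * e ^ 2 <= (g * e) * (1 / 10000)).
  { replace (g ^ 2 * e ^ 2) with ((g * e) * (g * e)) by ring. apply Rmult_le_compat_l; [lra|].
    assert (g * e <= L * e) by (apply Rmult_le_compat_r; lra). lra. }
  pose proof ge_le_Vge.
  assert (Hbr : 2 * V * g * e + g ^ 2 * e ^ 2 - V * (V * x) + 100 * L ^ 4 * e * x
                <= - (45 / 100) * (V * g * e)).
  { assert (V * (5 * g * e / 2) <= V * (V * x)) by (apply Rmult_le_compat_l; lra). lra. }
  assert (Hm : x * (2 * V * g * e + g ^ 2 * e ^ 2 - V * (V * x) + 100 * L ^ 4 * e * x)
               <= x * (- (45 / 100) * (V * g * e))) by (apply Rmult_le_compat_l; lra).
  assert ((45 / 100) * (g * e) * (5 * g * e / 2) <= (45 / 100) * (g * e) * (V * x))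
    by (apply Rmult_le_compat_l; lra).
  assert (0 <= g ^ 2 * e ^ 2) by (apply Rmult_le_pos; apply pow2_ge_0).
  nra.
Qed.

Section Profile.

Variables N P : R -> R.
Hypothesis hN_cont : forall x, continuous N x.
Hypothesis hN_lim : is_lim N p_infty 1.
Hypothesis hN_decr : strict_decr_pos N.
Hypothesis hP_pos : forall x, 0 < x -> 0 < P x.
Hypothesis hP_derive : forall x, is_derive P x (Derive P x).
Hypothesis hDP_derive : forall x, is_derive (Derive P) x (Derive (Derive P) x).
Hypothesis hDP_nonpos : forall x, 0 < x -> Derive P x <= 0.
Hypothesis hP_potential : forall x, 0 < x -> P x = potential c s (N x - 1).
Hypothesis hP_energy : forall x, 0 < x -> e * Derive P x ^ 2 / 2 = energy c s (N x - 1).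
Hypothesis hP_force : forall x, 0 < x -> e * Derive (Derive P) x = force c s (N x - 1).

Let T := 2 + 16 / (g * V).
Let kappa := Rmin 1 (g / 24).

Lemma T_pos : 0 < T.
Proof.
  pose proof V_ge_1. assert (0 < 16 / (g * V)) by (apply Rdiv_lt_0_compat; nra). unfold T. lra.
Qed.

Lemma amplitude_lt x0 : 0 < x0 -> N x0 - 1 < 4 * g * e / V.
Proof.
  intro Hx0. pose proof V_ge_1. pose proof energy_neg_at_amplitude.
  assert (HX : 0 < 4 * g * e / V) by (apply Rdiv_lt_0_compat; nra).
  destruct (Rlt_or_le (N x0 - 1) (4 * g * e / V)) as [|Hge]; [assumption|exfalso].
  destruct (is_lim_p_infty_Rabs N 1 _ hN_lim HX) as [M HM].
  pose proof (Rmax_l M x0). pose proof (Rmax_r M x0).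
  set (x2 := Rmax M x0 + 1) in *.
  specialize (HM x2 ltac:(unfold x2; lra)). apply Rabs_def2 in HM.
  destruct (IVT_gen_consistent N x0 x2 (1 + 4 * g * e / V) hN_cont) as [x [Hx HNx]].
  { rewrite Rmin_right, Rmax_left by lra. lra. }
  rewrite Rmin_left, Rmax_right in Hx by (unfold x2; lra).
  pose proof (hP_energy x ltac:(lra)) as HE.
  replace (N x - 1) with (4 * g * e / V) in HE by lra.
  pose proof (pow2_ge_0 (Derive P x)). nra.
Qed.

Lemma P_drop_while_large t : 1 <= t ->
  (forall y, 1 <= y <= t -> 5 * g * e / (2 * V) <= N y - 1) ->
  P t <= P 1 - g ^ 2 * e * (t - 1) ^ 2 / 2.
Proof.
  intros Ht Hlarge.
  assert (Hconc : forall y, 1 <= y <= t -> Derive (Derive P) y <= - (g ^ 2 * e)).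
  { intros y Hy. pose proof (amplitude_lt y ltac:(lra)). pose proof (Hlarge y Hy).
    pose proof (force_le_neg (N y - 1) ltac:(lra)) as Hf.
    rewrite <- hP_force in Hf by lra. apply (Rmult_le_reg_l e); [lra|]. lra. }
  assert (Hslope : forall y, 1 <= y <= t -> Derive P y <= - (g ^ 2 * e) * (y - 1)).
  { intros y Hy.
    assert (H : Derive P y - Derive P 1
                <= (fun z => - (g ^ 2 * e) * (z - 1)) y - (fun z => - (g ^ 2 * e) * (z - 1)) 1).
    { apply (increment_le_of_derive_le (Derive P) (fun z => - (g ^ 2 * e) * (z - 1))
        (Derive (Derive P)) (fun _ => - (g ^ 2 * e))); [lra| | |].
      - intros z _. apply hDP_derive.
      - intros z _. auto_derive; [easy|ring].
      - intros z Hz. apply Hconc. lra. }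
    cbv beta in H. pose proof (hDP_nonpos 1 Rlt_0_1). lra. }
  assert (Hdrop : P t - P 1 <= (fun z => - (g ^ 2 * e) * (z - 1) ^ 2 / 2) t
                             - (fun z => - (g ^ 2 * e) * (z - 1) ^ 2 / 2) 1).
  { apply (increment_le_of_derive_le P (fun z => - (g ^ 2 * e) * (z - 1) ^ 2 / 2)
      (Derive P) (fun z => - (g ^ 2 * e) * (z - 1))); [lra| | |].
    - intros z _. apply hP_derive.
    - intros z _. auto_derive; [easy|field].
    - exact Hslope. }
  cbv beta in Hdrop. lra.
Qed.

Lemma N_below_threshold : N T - 1 < 5 * g * e / (2 * V).
Proof.
  pose proof V_ge_1 as HV1. assert (HgV : 0 < g * V) by nra.
  assert (HT0 : 0 < 16 / (g * V)) by (apply Rdiv_lt_0_compat; lra).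
  destruct (Rlt_or_le (N T - 1) (5 * g * e / (2 * V))) as [|Hn]; [assumption|exfalso].
  assert (Hdrop : P T <= P 1 - g ^ 2 * e * (T - 1) ^ 2 / 2).
  { apply P_drop_while_large; [unfold T; lra|]. intros t Ht.
    destruct (Req_dec t T) as [->|Hne]; [lra|].
    pose proof (hN_decr t T ltac:(lra) ltac:(lra)). lra. }
  assert (HP1 : P 1 < 8 * g * e / V).
  { pose proof (strict_decr_pos_gt_lim N 1 hN_decr hN_lim 1 Rlt_0_1).
    pose proof (amplitude_lt 1 Rlt_0_1). pose proof (div_V_le (4 * g * e) ltac:(nra)).
    destruct (potential_bounds (N 1 - 1) ltac:(lra)) as [_ Hb].
    rewrite <- hP_potential in Hb by lra.
    assert (2 * (4 * g * e / V) = 8 * g * e / V) by (field; lra). lra. }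
  assert (Hdepth : 8 * g * e / V <= g ^ 2 * e * (T - 1) ^ 2 / 2).
  { assert (HT1 : 16 / (g * V) <= (T - 1) ^ 2) by (unfold T; nra).
    assert (g ^ 2 * e * (16 / (g * V)) / 2 <= g ^ 2 * e * (T - 1) ^ 2 / 2).
    { assert (0 < g ^ 2 * e) by (apply Rmult_lt_0_compat; nra). nra. }
    assert (g ^ 2 * e * (16 / (g * V)) / 2 = 8 * g * e / V) by (field; lra). lra. }
  pose proof (hP_pos T T_pos). lra.
Qed.

Lemma N_small_beyond_threshold t : T <= t -> 0 < N t - 1 < 5 * g * e / (2 * V).
Proof.
  intro Ht. pose proof N_below_threshold. pose proof T_pos.
  pose proof (strict_decr_pos_gt_lim N 1 hN_decr hN_lim t ltac:(lra)). split; [lra|].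
  destruct (Req_dec t T) as [->|Hne]; [lra|].
  pose proof (hN_decr T t T_pos ltac:(lra)). lra.
Qed.

Lemma N_in_range_beyond_threshold t : T <= t -> 0 <= N t - 1 <= 4 * g * e.
Proof.
  intro Ht. pose proof (N_small_beyond_threshold t Ht). pose proof V_ge_1.
  assert (0 < g * e) by (apply Rmult_lt_0_compat; lra).
  pose proof (div_V_le (5 * g * e / 2) ltac:(lra)).
  assert (5 * g * e / (2 * V) = 5 * g * e / 2 / V) by (field; lra).
  lra.
Qed.

Lemma Derive_P_le_decay t : T <= t -> Derive P t <= - kappa * P t.
Proof.
  intro Ht. pose proof T_pos. pose proof (N_small_beyond_threshold t Ht) as Hm.
  pose proof (N_in_range_beyond_threshold t Ht) as Hm4.
  pose proof (energy_ge_quadratic (N t - 1) ltac:(lra)) as HE. rewrite <- hP_energy in HE by lra.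
  destruct (potential_bounds (N t - 1) Hm4) as [_ Hb]. rewrite <- hP_potential in Hb by lra.
  pose proof (hP_pos t ltac:(lra)). pose proof (hDP_nonpos t ltac:(lra)).
  assert (Hk : 0 < kappa <= 1 /\ kappa <= g / 24)
    by (unfold kappa; repeat split; [apply Rmin_pos|apply Rmin_l|apply Rmin_r]; lra).
  set (m := N t - 1) in *. set (p := Derive P t) in *. set (q := P t) in *.
  assert (Hpm : g / 6 * m ^ 2 <= p ^ 2) by (apply (Rmult_le_reg_l (e / 2)); [lra|]; lra).
  assert (Hqm : q ^ 2 <= 4 * m ^ 2) by nra.
  assert (Hpq : g / 24 * q ^ 2 <= p ^ 2) by nra.
  destruct (Rle_or_lt p (- kappa * q)) as [|Hlt]; [assumption|exfalso].
  assert (p ^ 2 < (kappa * q) ^ 2) by nra.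
  assert ((kappa * q) ^ 2 <= g / 24 * q ^ 2).
  { replace ((kappa * q) ^ 2) with ((kappa * kappa) * q ^ 2) by ring.
    apply Rmult_le_compat_r; [apply pow2_ge_0|nra]. }
  lra.
Qed.

Lemma P_exp_decay xi : T <= xi -> P xi <= P T * exp (- (kappa * (xi - T))).
Proof.
  intro Hxi.
  assert (H : P xi * exp (kappa * (xi - T)) - P T * exp (kappa * (T - T)) <= 0 - 0).
  { apply (increment_le_of_derive_le (fun t => P t * exp (kappa * (t - T))) (fun _ => 0)
      (fun t => (Derive P t + kappa * P t) * exp (kappa * (t - T))) (fun _ => 0)); [lra| | |].
    - intros y _. specialize (hP_derive y). auto_derive; [now exists (Derive P y)|].
      change (fun x => P x) with P. replace (y + - T) with (y - T) by ring. ring.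
    - intros y _. auto_derive; [easy|reflexivity].
    - intros y Hy. pose proof (Derive_P_le_decay y ltac:(lra)).
      pose proof (exp_pos (kappa * (y - T))). nra. }
  rewrite Rminus_diag, Rmult_0_r, exp_0, Rmult_1_r in H.
  rewrite exp_Ropp. pose proof (exp_pos (kappa * (xi - T))).
  apply (Rmult_le_reg_r (exp (kappa * (xi - T)))); [lra|].
  field_simplify; lra.
Qed.

Lemma profile_decay delta xi : 0 < delta ->
  T + Rabs (ln (10 * g / (V * delta))) / kappa <= xi -> 0 < (N xi - 1) / e <= delta.
Proof.
  intros Hdelta Hxi. pose proof V_ge_1.
  assert (Hk : 0 < kappa) by (unfold kappa; apply Rmin_pos; lra).
  assert (0 <= Rabs (ln (10 * g / (V * delta))) / kappa)
    by (apply Rdiv_le_0_compat; [apply Rabs_pos|lra]).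
  assert (HxiT : T <= xi) by lra.
  pose proof (N_small_beyond_threshold xi HxiT) as Hm.
  split; [apply Rdiv_lt_0_compat; lra|].
  set (A := 10 * g / (V * delta)) in *.
  assert (HA : 0 < A) by (unfold A; apply Rdiv_lt_0_compat; nra).
  assert (Hexp : exp (- (kappa * (xi - T))) <= / A).
  { assert (Hl : ln A <= kappa * (xi - T)).
    { pose proof (Rle_abs (ln A)).
      enough (Rabs (ln A) <= kappa * (xi - T)) by lra.
      replace (Rabs (ln A)) with (Rabs (ln A) / kappa * kappa) by (field; lra).
      rewrite (Rmult_comm kappa). apply Rmult_le_compat_r; lra. }
    rewrite <- (exp_ln A), <- exp_Ropp by lra.
    destruct (Rle_lt_or_eq_dec _ _ Hl) as [Hlt|Heq].
    - apply Rlt_le, exp_increasing. lra.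
    - rewrite Heq. lra. }
  assert (HPT : P T < 5 * g * e / V).
  { pose proof (N_small_beyond_threshold T (Rle_refl T)).
    destruct (potential_bounds _ (N_in_range_beyond_threshold T (Rle_refl T))) as [_ Hb].
    rewrite <- hP_potential in Hb by exact T_pos.
    assert (2 * (5 * g * e / (2 * V)) = 5 * g * e / V) by (field; lra). lra. }
  assert (Hmxi : N xi - 1 <= 2 * P xi).
  { destruct (potential_bounds _ (N_in_range_beyond_threshold xi HxiT)) as [Hb _].
    rewrite <- hP_potential in Hb by (pose proof T_pos; lra). lra. }
  pose proof (P_exp_decay xi HxiT) as Hdec.
  pose proof (hP_pos T T_pos). pose proof (exp_pos (- (kappa * (xi - T)))).
  assert (P T * exp (- (kappa * (xi - T))) <= (5 * g * e / V) * / A)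
    by (apply Rmult_le_compat; lra).
  assert (2 * ((5 * g * e / V) * / A) = e * delta) by (unfold A; field; split; lra).
  apply (Rmult_le_reg_l e); [lra|].
  replace (e * ((N xi - 1) / e)) with (N xi - 1) by (field; lra). lra.
Qed.

End Profile.

End SmallAmplitude.

Lemma solitary_wave_decay sigma gamma eps n u phi delta xi :
  0 <= sigma -> 0 < gamma -> 0 < eps -> eps * (10000 * (1 + sigma + gamma) ^ 6) <= gamma ->
  solitary_wave sigma gamma eps n u phi -> 0 < delta ->
  2 + 16 / (gamma * sqrt (1 + sigma))
    + Rabs (ln (10 * gamma / (sqrt (1 + sigma) * delta))) / Rmin 1 (gamma / 24) <= xi ->
  0 < (n xi - 1) / eps <= delta.
Proof.
  intros hs hg he hsmall
    (n_smooth & u_smooth & phi_smooth & hsys & (n_lim & _ & u_lim & _ & phi_lim & _)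
    & _ & _ & _ & _ & n_decr & _ & phi_decr).
  assert (n_ex : forall x, ex_derive n x) by (intro x; exact (n_smooth 1%nat x)).
  assert (u_ex : forall x, ex_derive u x) by (intro x; exact (u_smooth 1%nat x)).
  assert (phi_ex : forall x, ex_derive phi x) by (intro x; exact (phi_smooth 1%nat x)).
  assert (dphi_ex : forall x, ex_derive (Derive phi) x) by (intro x; exact (phi_smooth 2%nat x)).
  pose proof (fun x => proj1 (hsys x)) as mass.
  pose proof (fun x => proj1 (proj2 (hsys x))) as momentum.
  pose proof (fun x => proj2 (proj2 (hsys x))) as poisson.
  apply (profile_decay sigma gamma eps hs hg he hsmall n phi).
  - intro x. apply (ex_derive_continuous n). apply n_ex.
  - exact n_lim.
  - exact n_decr.
  - now apply P_pos.
  - intro x. now apply Derive_correct.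
  - intro x. now apply Derive_correct.
  - now apply Derive_P_nonpos.
  - now apply (bernoulli_integral _ _ n u phi).
  - now apply (energy_integral _ _ _ n u phi).
  - now apply (poisson_force _ _ _ n u phi).
Qed.

Theorem lemma4p2 (sigma gamma : R) (hsigma : 0 <= sigma) (hgamma : 0 < gamma)
  (eps1 : R) (heps1 : 0 < eps1) (n u phi : R -> R -> R)
  (hsw : forall eps, 0 < eps < eps1 -> solitary_wave sigma gamma eps (n eps) (u eps) (phi eps)) :
  exists eps0 delta1 : R, 0 < eps0 /\ eps0 <= eps1 /\ 0 < delta1 /\
    forall delta, 0 < delta < delta1 ->
      exists xi_delta, 0 < xi_delta /\
        forall xi eps, xi_delta <= xi -> 0 < eps < eps0 ->
          0 < (n eps xi - 1) / eps /\ (n eps xi - 1) / eps <= delta.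
Proof.
  set (K := 10000 * (1 + sigma + gamma) ^ 6).
  assert (HK : 0 < K)
    by (unfold K; assert (0 < (1 + sigma + gamma) ^ 6) by (apply pow_lt; lra); lra).
  exists (Rmin eps1 (gamma / K)), 1.
  pose proof (Rmin_l eps1 (gamma / K)). pose proof (Rmin_r eps1 (gamma / K)).
  split; [apply Rmin_pos; [lra|apply Rdiv_lt_0_compat; lra]|].
  split; [lra|]. split; [lra|].
  intros delta Hdelta.
  exists (2 + 16 / (gamma * sqrt (1 + sigma))
          + Rabs (ln (10 * gamma / (sqrt (1 + sigma) * delta))) / Rmin 1 (gamma / 24)).
  split.
  - pose proof (T_pos sigma gamma hsigma hgamma).
    assert (0 <= Rabs (ln (10 * gamma / (sqrt (1 + sigma) * delta))) / Rmin 1 (gamma / 24))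
      by (apply Rdiv_le_0_compat; [apply Rabs_pos|apply Rmin_pos; lra]).
    lra.
  - intros xi eps Hxi Heps.
    apply (solitary_wave_decay sigma gamma eps (n eps) (u eps) (phi eps) delta xi); try lra.
    + fold K. replace gamma with (gamma / K * K) by (field; lra).
      apply Rmult_le_compat_r; lra.
    + apply hsw. lra.
Qed.
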